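(* Let $k\ge1$ and let $(T,o)$ be a valid finite rooted tree. If $K\subset V(T)$ satisfies $m(K,T)>0$ and $v_0\in V(T)\setminus K$, then $m(K\cup\{v_0\},T)<m(K,T)$.
   Context: Trees. For a finite rooted tree $(T,o)$, the height of a vertex is its distance from $o$ and the height of $T$ is the maximal height of a vertex. Vertices of even (odd) height are called even (odd); $V(T)$ and $U(T)$ denote the sets of even and odd vertices. $(T,o)$ is valid if its height is even and every odd vertex has degree exactly $k+1$ in $T$. For $K\subset V(T)$, $m(K,T)$ is the number of matchings of $T$ in which every vertex of $K\cup U(T)$ is saturated. *)

From mathcomp Require Import all_boot.
Set Implicit Arguments. Unset Strict Implicit. Unset Printing Implicit Defensive.

Section Trees.
Variable V : finType.
Variable e : rel V.

Definition simple_graph := symmetric e /\ irreflexive e.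

Fixpoint ball (u : V) (n : nat) : {set V} :=
  match n with
  | 0 => [set u]
  | n'.+1 => ball u n' :|: [set y | [exists x in ball u n', e x y]]
  end.

Definition connected_graph := forall u v : V, v \in ball u #|V|.

Definition acyclic := forall c : seq V, uniq c -> 3 <= size c -> ~~ cycle e c.

Definition is_tree := [/\ simple_graph, connected_graph & acyclic].

(* graph distance (for connected graphs): least n with v within distance n *)
Definition dist (u v : V) : nat := find (fun n => v \in ball u n) (iota 0 #|V|).

Definition height (o v : V) : nat := dist o v.

Definition tree_height (o : V) : nat := \max_(v : V) height o v.

Definition even_vertices (o : V) : {set V} := [set v | ~~ odd (height o v)].
Definition odd_vertices (o : V) : {set V} := [set v | odd (height o v)].

Definition deg (v : V) : nat := #|[set y | e v y]|.

Definition valid (o : V) (k : nat) :=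
  ~~ odd (tree_height o) /\ forall v, v \in odd_vertices o -> deg v = k.+1.

Definition is_edge (s : {set V}) := [exists x, exists y, e x y && (s == [set x; y])].

Definition is_matching (M : {set {set V}}) :=
  [forall s in M, is_edge s] &&
  [forall s in M, forall t in M, (s != t) ==> [disjoint s & t]].

Definition saturates (M : {set {set V}}) (v : V) := [exists s in M, v \in s].

Definition mcount (o : V) (K : {set V}) : nat :=
  #|[set M : {set {set V}} | is_matching M &&
      [forall v in K :|: odd_vertices o, saturates M v]]|.

End Trees.

From mathcomp Require Import all_boot zify.
Set Implicit Arguments. Unset Strict Implicit. Unset Printing Implicit Defensive.

(* Take a matching M counted by m(K,T).  Measuring heights from v0 instead of
   o preserves their parity (v0 is even), so every vertex of odd height from
   v0 has degree k+1 >= 2 and hence a child.  If M matches v0, it does so with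
   a child u; replace the edge v0u by uw for a child w of u.  If w was matched,
   its partner is a child of w and the same repair continues from w.  The
   repairs move strictly downwards, so they stop, leaving a matching that
   saturates everything M saturated except v0: it is counted by m(K,T) but
   not by m(K + v0,T), and every matching counted by the latter is counted by
   the former. *)

Section RootedTree.
Variables (V : finType) (e : rel V) (r : V).
Hypotheses (e_sym : symmetric e) (e_irr : irreflexive e).
Hypotheses (e_conn : connected_graph e) (e_acyc : acyclic e).

Local Notation h := (height e r).

Lemma ball_mono m n : m <= n -> ball e r m \subset ball e r n.
Proof.
move/subnKC <-; elim: (n - m) => [|d IH]; first by rewrite addn0.
by rewrite addnS (subset_trans IH) //= subsetUl.
Qed.

Lemma mem_ball_height v : v \in ball e r (h v).
Proof.
rewrite /height /dist.
have [v_reached|v_unreached] := boolP (has (fun n => v \in ball e r n) (iota 0 #|V|)).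
  have := nth_find 0 v_reached; rewrite nth_iota ?add0n //.
  by rewrite -{2}(size_iota 0 #|V|) -has_find.
by rewrite (hasNfind v_unreached) size_iota; apply: e_conn.
Qed.

Lemma notin_ball m v : m < h v -> v \notin ball e r m.
Proof.
rewrite /height /dist => lt_m.
have := before_find 0 lt_m; rewrite nth_iota ?add0n ?lt_m // => [-> //|].
by apply: leq_trans lt_m _; rewrite -{2}(size_iota 0 #|V|) find_size.
Qed.

Lemma mem_ballE n v : (v \in ball e r n) = (h v <= n).
Proof.
case: leqP => [le_hn|lt_nh]; last exact/negbTE/notin_ball.
exact: subsetP (ball_mono le_hn) _ (mem_ball_height v).
Qed.

Lemma height_le_card v : h v <= #|V|.
Proof. by rewrite -mem_ballE; apply: e_conn. Qed.

Lemma height_eq0 v : h v = 0 -> v = r.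
Proof. by move=> hv0; have := mem_ball_height v; rewrite hv0 inE => /eqP. Qed.

Lemma height_root : h r = 0.
Proof. by apply/eqP; rewrite -leqn0 -mem_ballE inE. Qed.

Lemma height_edge_le x y : e x y -> h y <= (h x).+1.
Proof.
move=> exy; rewrite -mem_ballE /= in_setU inE; apply/orP; right.
by apply/existsP; exists x; rewrite mem_ballE leqnn exy.
Qed.

Lemma exists_parent v : 0 < h v -> exists x, e x v && (h x == (h v).-1).
Proof.
case hv: (h v) => [//|n] _.
have := mem_ball_height v; rewrite hv /= in_setU (negbTE (notin_ball _)) ?hv //=.
rewrite inE => /existsP[x /andP[x_near exv]]; exists x; rewrite exv /=.
by rewrite mem_ballE in x_near; have := height_edge_le exv; rewrite hv eqn_leq x_near.
Qed.

(* The root is its own parent. *)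
Definition parent v := if [pick x | e x v && (h x == (h v).-1)] is Some x then x else v.

Lemma parent_edge v : 0 < h v -> e (parent v) v.
Proof.
move=> hv_gt0; rewrite /parent; case: pickP => [x /andP[] //|no_parent].
by case: (exists_parent hv_gt0) => x; rewrite no_parent.
Qed.

Lemma height_parent v : h (parent v) = (h v).-1.
Proof.
rewrite /parent; case: pickP => [x /andP[_ /eqP] //|no_parent].
case: (posnP (h v)) => [-> //|hv_gt0].
by case: (exists_parent hv_gt0) => x; rewrite no_parent.
Qed.

Lemma height_iter_parent i v : h (iter i parent v) = h v - i.
Proof. by elim: i => [|i IH]; rewrite ?subn0 //= height_parent IH subnS. Qed.

Lemma path_parent m x : m <= h x -> path e x (traject parent (parent x) m).
Proof.
elim: m x => [//|m IH] x le_mh /=.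
rewrite e_sym parent_edge /=; last by lia.
by apply: IH; rewrite height_parent; lia.
Qed.

Lemma path_parent_rev m y : m <= h y -> path e (iter m parent y) (rev (traject parent y m)).
Proof.
elim: m => [//|m IH] le_mh.
rewrite trajectSr rev_rcons /= IH ?andbT; last by lia.
by apply: parent_edge; rewrite height_iter_parent; lia.
Qed.

Lemma uniq_traject_parent m x : m <= (h x).+1 -> uniq (traject parent x m).
Proof.
elim: m x => [//|m IH] x le_mh /=; rewrite IH ?andbT; last by rewrite height_parent; lia.
apply/trajectP => -[i lt_im /(congr1 h)]; rewrite height_iter_parent height_parent; lia.
Qed.

Lemma ancestors_meet x y : x != y -> h x = h y ->
  exists t, [/\ 0 < t <= h x, iter t parent x = iter t parent y &
                forall i, i < t -> iter i parent x != iter i parent y].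
Proof.
move=> neq_xy hxy.
have at_root z : h z <= h x -> iter (h x) parent z = r.
  by move=> le_zx; apply: height_eq0; rewrite height_iter_parent; lia.
have meet : exists t, iter t parent x == iter t parent y.
  by exists (h x); rewrite !at_root // hxy.
case: (ex_minnP meet) => t /eqP meet_t t_min; exists t; split=> //.
- case: t meet_t t_min => [/= eq_xy|t _ t_min]; first by rewrite eq_xy eqxx in neq_xy.
  by rewrite /= t_min // !at_root // hxy.
- by move=> i lt_it; apply: contraTneq lt_it => /eqP/t_min; rewrite leqNgt.
Qed.

(* Two distinct vertices of equal height cannot be joined by a path lying
   strictly above them: with their ancestor chains it would close a cycle. *)
Lemma no_bypass x y p : x != y -> h x = h y -> uniq p ->
  all (fun z => h x < h z) p -> ~~ path e y (rcons p x).
Proof.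
move=> neq_xy hxy uniq_p /allP p_high; apply/negP; rewrite rcons_path => /andP[p_path p_x].
have [[|t] [/andP[//= _ le_th] meet t_min]] := ancestors_meet neq_xy hxy.
have meet_t : iter t.+1 parent x = iter t.+1 parent y := meet.
set c := traject parent x t.+2 ++ rev (traject parent y t.+1) ++ p.
have chain_low m v z : z \in traject parent v m -> h z <= h v.
  by case/trajectP => i _ ->; rewrite height_iter_parent leq_subr.
have p_off (s : seq V) : (forall z, z \in s -> h z <= h x) -> ~~ has (fun z => z \in s) p.
  move=> s_low; apply/hasPn => z /p_high; apply: contraTN => /s_low; lia.
have c_cycle : cycle e c.
  have last_ty z : last z (rev (traject parent y t.+1)) = y.
    by rewrite trajectS rev_cons last_rcons.
  have x_chain : path e (last y p) (traject parent x t.+2).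
    by rewrite trajectS; apply/andP; split; last exact: (path_parent le_th).
  rewrite (cycle_path x) /c !last_cat last_ty cat_path x_chain trajectS last_cons.
  by rewrite last_traject meet_t cat_path path_parent_rev -?hxy // last_ty p_path.
have c_uniq : uniq c.
  rewrite 2!cat_uniq has_cat has_rev rev_uniq uniq_p !uniq_traject_parent; try lia.
  rewrite !(negbTE (p_off _ _)) ?orbF ?andbT ?andTb => [|z|z]; last 2 first.
  - by rewrite mem_rev hxy => /chain_low.
  - exact: chain_low.
  apply/hasPn => z /trajectP[j lt_jt ->].
  apply/trajectP => -[i lt_it /[dup] /(congr1 h)]; rewrite !height_iter_parent hxy => hij.
  have -> : i = j by lia.
  by apply/eqP; rewrite eq_sym t_min.
have c_size : 3 <= size c by rewrite !size_cat size_rev !size_traject; lia.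
by move: (e_acyc c_uniq c_size); rewrite c_cycle.
Qed.

Lemma height_edge x y : e x y -> h y = (h x).+1 \/ h x = (h y).+1.
Proof.
move=> exy; have eyx : e y x by rewrite e_sym.
have neq_h : h x != h y.
  apply/eqP => hxy; have neq_xy : x != y by apply: contraTneq exy => ->; rewrite e_irr.
  by move: (no_bypass neq_xy hxy (isT : uniq [::]) isT); rewrite /= eyx.
have := height_edge_le exy; have := height_edge_le eyx; lia.
Qed.

Lemma lower_neighbor_unique a b c : e a c -> e b c ->
  (h a).+1 = h c -> (h b).+1 = h c -> a = b.
Proof.
move=> eac ebc hac hbc; apply/eqP; apply: contraT => neq_ab.
have hab : h a = h b by apply: succn_inj; rewrite hac hbc.
have := no_bypass neq_ab hab (isT : uniq [:: c]).
by rewrite /= -hac ltnSn ebc e_sym eac => /(_ isT).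
Qed.

Lemma odd_height_edge x y : e x y -> odd (h y) = ~~ odd (h x).
Proof. by case/height_edge => ->; rewrite /= ?negbK. Qed.

Lemma exists_child u : 1 < deg e u -> exists2 w, e u w & h w = (h u).+1.
Proof.
case/card_gt1P => a [b []]; rewrite !inE => eua eub neq_ab.
case: (height_edge eua) => [|hua]; first by exists a.
case: (height_edge eub) => [|hub]; first by exists b.
by move: neq_ab; rewrite (lower_neighbor_unique _ _ (esym hua) (esym hub)) ?eqxx // e_sym.
Qed.
End RootedTree.

Lemma odd_height_reroot (V : finType) (e : rel V) (r s y : V) :
  symmetric e -> irreflexive e -> connected_graph e -> acyclic e ->
  odd (height e s y) = odd (height e s r) (+) odd (height e r y).
Proof.
move=> e_sym e_irr e_conn e_acyc; have [n] := ubnP (height e r y).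
elim: n y => [//|n IH] y; rewrite ltnS => le_yn.
have [hy0|hy_gt0] := posnP (height e r y).
  by rewrite hy0 (height_eq0 e_conn hy0) addbF.
have ep := parent_edge e_conn hy_gt0.
rewrite (odd_height_edge s e_sym e_irr e_conn e_acyc ep) IH; last first.
  by rewrite height_parent // prednK.
by rewrite (odd_height_edge r e_sym e_irr e_conn e_acyc ep) addbN.
Qed.

Section Matchings.
Variables (V : finType) (e : rel V).
Implicit Types (M N : {set {set V}}) (s : {set V}).

Lemma saturates_setU1 M s v : saturates (s |: M) v = (v \in s) || saturates M v.
Proof.
apply/existsP/orP => [[t /andP[]]|[v_s|/existsP[t /andP[tM vt]]]].
- rewrite in_setU1 => /orP[/eqP -> ->|tM vt]; first by left.
  by right; apply/existsP; exists t; rewrite tM.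
- by exists s; rewrite setU11.
- by exists t; rewrite in_setU1 tM orbT.
Qed.

Lemma saturates_setD1 M s v : is_matching e M -> s \in M ->
  saturates (M :\ s) v = saturates M v && (v \notin s).
Proof.
case/andP=> _ /forall_inP M_disj sM; apply/existsP/andP.
- case=> t /andP[]; rewrite in_setD1 => /andP[neq_ts tM] vt; split.
    by apply/existsP; exists t; rewrite tM.
  by have := forall_inP (M_disj t tM) s sM; rewrite neq_ts => /disjointFr->.
- case=> /existsP[t /andP[tM vt]] v_s; exists t; rewrite in_setD1 tM vt !andbT.
  by apply: contraNneq v_s => <-.
Qed.

Lemma matching_subset M N : N \subset M -> is_matching e M -> is_matching e N.
Proof.
move=> /subsetP sNM /andP[/forall_inP M_edge /forall_inP M_disj].
apply/andP; split; apply/forall_inP => s /sNM sM; first exact: M_edge.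
by apply/forall_inP => t /sNM tM; apply: (forall_inP (M_disj s sM)).
Qed.

Lemma matching_setU1 M a b : is_matching e M -> e a b ->
  ~~ saturates M a -> ~~ saturates M b -> is_matching e ([set a; b] |: M).
Proof.
case/andP=> /forall_inP M_edge /forall_inP M_disj eab a_free b_free.
have ab_disj t : t \in M -> [disjoint t & [set a; b]].
  move=> tM; apply/pred0P => v /=; rewrite !inE; apply/negP => /andP[vt /orP[] /eqP v_ab].
    by move/existsP: a_free; apply; exists t; rewrite tM -v_ab.
  by move/existsP: b_free; apply; exists t; rewrite tM -v_ab.
apply/andP; split; apply/forall_inP => s; rewrite in_setU1 => /orP[/eqP->|sM].
- by apply/existsP; exists a; apply/existsP; exists b; rewrite eab eqxx.
- exact: M_edge.
- apply/forall_inP => t; rewrite in_setU1 => /orP[/eqP->|tM]; first by rewrite eqxx.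
  by rewrite disjoint_sym ab_disj ?implybT.
- apply/forall_inP => t; rewrite in_setU1 => /orP[/eqP->|tM].
    by rewrite ab_disj ?implybT.
  exact: (forall_inP (M_disj s sM)).
Qed.

Lemma matched_partner M w : symmetric e -> is_matching e M -> saturates M w ->
  exists2 u, e w u & [set w; u] \in M.
Proof.
move=> e_sym /andP[/forall_inP M_edge _] /existsP[s /andP[sM ws]].
have /existsP[x /existsP[y /andP[exy /eqP s_xy]]] := M_edge s sM.
move: ws; rewrite s_xy !inE => /orP[] /eqP->; first by exists y; rewrite -?s_xy.
by exists x; rewrite 1?e_sym // setUC -s_xy.
Qed.
End Matchings.

Section FreeVertex.
Variables (V : finType) (e : rel V) (r : V).
Hypotheses (e_sym : symmetric e) (e_irr : irreflexive e).
Hypotheses (e_conn : connected_graph e) (e_acyc : acyclic e).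
Hypothesis deg_odd : forall u, odd (height e r u) -> 1 < deg e u.

Local Notation h := (height e r).
Let edge_height := height_edge r e_sym e_irr e_conn e_acyc.
Implicit Types (M N : {set {set V}}).

(* The last clause keeps the edge [u; w] added by [frees_step] disjoint from [N]. *)
Definition frees M x N := [/\ is_matching e N, ~~ saturates N x,
  forall v, v != x -> saturates M v -> saturates N v &
  forall v, saturates N v -> saturates M v || (h x < h v)].

Lemma frees_refl M x : is_matching e M -> ~~ saturates M x -> frees M x M.
Proof. by move=> Mm x_free; split=> // v ->. Qed.

Lemma frees_step M N x u w : is_matching e M -> [set x; u] \in M -> e u w ->
  h u = (h x).+1 -> h w = (h u).+1 ->
  frees (M :\ [set x; u]) w N -> frees M x ([set u; w] |: N).
Proof.
move=> Mm xuM euw hu hw [Nm w_free N_keep N_new].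
have M1E v := saturates_setD1 v Mm xuM.
have u_free : ~~ saturates N u.
  by apply/negP => /N_new; rewrite M1E !inE eqxx orbT andbF /=; lia.
have u_sat : saturates M u by apply/existsP; exists [set x; u]; rewrite xuM !inE eqxx orbT.
have [neq_xu neq_xw] : x != u /\ x != w.
  by split; apply/eqP => eq_x; move: hu hw; rewrite eq_x; lia.
split.
- exact: matching_setU1.
- rewrite saturates_setU1 !inE !negb_or neq_xu neq_xw /=; apply/negP => /N_new.
  by rewrite M1E !inE eqxx andbF /=; lia.
- move=> v neq_vx v_sat; rewrite saturates_setU1 !inE.
  have [->|neq_vu] := eqVneq v u; first by [].
  have [->|neq_vw] := eqVneq v w; first by rewrite orbT.
  by rewrite N_keep // M1E v_sat !inE negb_or neq_vx neq_vu.
- move=> v; rewrite saturates_setU1 !inE => /orP[/orP[] /eqP->|/N_new]; try lia.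
  by rewrite M1E => /orP[/andP[-> _]|]; rewrite ?orbT //; lia.
Qed.

Lemma free_vertex n x M : #|V| < h x + n -> ~~ odd (h x) -> is_matching e M ->
  (forall u, e x u -> [set x; u] \in M -> h x < h u) -> exists N, frees M x N.
Proof.
elim: n x M => [|n IH] x M; first by rewrite addn0 ltnNge height_le_card.
move=> x_low x_even Mm x_down.
have [x_sat|x_free] := boolP (saturates M x); last by exists M; apply: frees_refl.
have [u exu xuM] := matched_partner e_sym Mm x_sat.
have hu : h u = (h x).+1 by have := x_down u exu xuM; case: (edge_height exu); lia.
have [w euw hw] : exists2 w, e u w & h w = (h u).+1.
  by apply: exists_child => //; apply: deg_odd; rewrite hu /= x_even.
have M1m : is_matching e (M :\ [set x; u]) by apply: matching_subset Mm; apply: subsetDl.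
have [N N_frees] : exists N, frees (M :\ [set x; u]) w N.
  apply: IH => //; first by lia.
    by rewrite hw hu /= negbK.
  move=> u' ewu' wu'M1; case: (edge_height ewu') => [->//|hwu'].
  have eq_u'u : u' = u by apply: lower_neighbor_unique (esym hwu') (esym hw); rewrite // e_sym.
  move: wu'M1; rewrite eq_u'u => wuM1.
  have : saturates (M :\ [set x; u]) u.
    by apply/existsP; exists [set w; u]; rewrite wuM1 !inE eqxx orbT.
  by rewrite (saturates_setD1 _ Mm xuM) !inE eqxx orbT andbF.
by exists ([set u; w] |: N); apply: frees_step N_frees.
Qed.

Lemma free_root M : is_matching e M -> exists N, frees M r N.
Proof.
move=> Mm; apply: (free_vertex (n := #|V|.+1)) => //; rewrite ?height_root // => u eru _.
by rewrite lt0n; apply: contraTneq eru => /height_eq0 ->; rewrite ?e_irr.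
Qed.
End FreeVertex.

Theorem claim2p10 (V : finType) (e : rel V) (o : V) (k : nat) :
  1 <= k -> is_tree e -> valid e o k ->
  forall K : {set V}, K \subset even_vertices e o ->
  0 < mcount e o K ->
  forall v0 : V, v0 \in even_vertices e o -> v0 \notin K ->
  mcount e o (v0 |: K) < mcount e o K.
Proof.
move=> k_gt0 [[e_sym e_irr] e_conn e_acyc] [_ odd_deg] K _ mK_gt0 v0 v0_even v0_notK.
have deg_odd u : odd (height e v0 u) -> 1 < deg e u.
  move=> hu; rewrite odd_deg ?ltnS // inE.
  rewrite (odd_height_reroot v0 o u e_sym e_irr e_conn e_acyc).
  by move: v0_even; rewrite inE => /negbTE->.
case/card_gt0P: mK_gt0 => M; rewrite inE => /andP[Mm /forall_inP M_sat].
have [N [Nm v0_free N_keep _]] := free_root e_sym e_irr e_conn e_acyc deg_odd Mm.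
apply/proper_card/properP; split.
  have sub_K : K :|: odd_vertices e o \subset (v0 |: K) :|: odd_vertices e o.
    by rewrite setSU // subsetUr.
  apply/subsetP => M'; rewrite !inE => /andP[-> /forall_inP M'_sat].
  by apply/forall_inP => v vK; apply/M'_sat/(subsetP sub_K).
exists N.
  rewrite inE Nm; apply/forall_inP => v vK; apply: N_keep; last exact: M_sat.
  apply: contraTneq vK => ->; rewrite !inE negb_or v0_notK.
  by move: v0_even; rewrite inE.
rewrite inE Nm negb_forall_in; apply/existsP; exists v0.
by rewrite !inE eqxx.
Qed.
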